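(* Let $p$ be a prime, $q$ a power of $p$, and $F$ a field of characteristic $p$ containing $\mathbb{F}_q$. Let $L\in F[x]$ be a monic $q$-polynomial of $q$-degree $n$ such that: (1) $L(x)/x$ is irreducible over $F$; (2) $L$ is not a $q^s$-polynomial for any integer $s>1$; (3) $L=x^{q^n}+a_{n-k}x^{q^{n-k}}+\cdots+a_0x$ with $1\leq k\leq n$ and $a_{n-k}\neq0$ (so the coefficients of $x^{q^{n-1}},\dots,x^{q^{n-k+1}}$ vanish). Let $V$ be the space of roots of $L$ in a splitting field $E$ of $L$ over $F$, and let $\alpha,\beta\in V$ be linearly independent over $\mathbb{F}_q$. If $d$ is a positive integer such that $\alpha^d,\alpha^{d-1}\beta,\dots,\beta^d$ are linearly dependent over $\mathbb{F}_q$, then $d\geq q^k+1$.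
   Context: A $q$-polynomial of $q$-degree $n$ is $\sum_{i=0}^n a_ix^{q^i}$ with $a_n\neq0$; it is a $q^s$-polynomial if only exponents $q^j$ with $s\mid j$ occur. *)

From HB Require Import structures.
From mathcomp Require Import all_boot all_order all_algebra all_field.
Set Implicit Arguments. Unset Strict Implicit. Unset Printing Implicit Defensive.
Import GRing.Theory.
Local Open Scope ring_scope.

Definition is_qpoly_deg (F : fieldType) (q n : nat) (L : {poly F}) : Prop :=
  size L = (q ^ n).+1 /\
  (forall i : nat, L`_i != 0 -> exists j : nat, (j <= n)%N /\ i = (q ^ j)%N).

Definition is_qs_poly (F : fieldType) (q s : nat) (L : {poly F}) : Prop :=
  forall i : nat, L`_i != 0 -> exists j : nat, (s %| j)%N /\ i = (q ^ j)%N.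

From HB Require Import structures.
From mathcomp Require Import all_boot all_order all_algebra all_field.
From mathcomp Require Import zify.
Set Implicit Arguments.
Unset Strict Implicit.
Unset Printing Implicit Defensive.

Import GRing.Theory.
Local Open Scope ring_scope.

(* Put g = alpha / beta and P = L(x)/x. A dependence relation of degree d makes g algebraic of
   degree at most d over F, while beta has degree q^n - 1 over F since P is irreducible. As beta
   and g beta are roots of P, beta is a root of P(gx) - g^(q^n - 1) P(x), which has coefficients
   in F(g) and, because of the gap in the coefficients of L, degree below q^(n-k). This
   polynomial is nonzero: otherwise g^(q^j) = g for every x^(q^j) occurring in L, hence g^q = g
   as L is not a q^s-polynomial for s > 1; then g lies in F_q, contradicting the independence of
   alpha and beta. The tower F <= F(g) <= F(g, beta) gives q^n - 1 <= (q^(n-k) - 1) d, which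
   fails for d <= q^k. *)

Lemma qpow_fixed_period (R : pzSemiRingType) (g : R) (q n : nat) :
  (0 < n)%N -> g ^+ (q ^ n) = g ->
  exists2 s, (0 < s)%N & forall j, (g ^+ (q ^ j) == g) = (s %| j)%N.
Proof.
move=> n_gt0 gn.
have exP : exists s, (0 < s)%N && (g ^+ (q ^ s) == g) by exists n; rewrite n_gt0 gn eqxx.
have [s /andP[s_gt0 /eqP gs] s_min] := ex_minnP exP.
have gsm t : g ^+ (q ^ (s * t)) = g.
  by elim: t => [|t IHt]; rewrite ?muln0 ?expr1 // mulnS expnD exprM gs.
exists s => // j; apply/eqP/idP => [gj | /dvdnP[t ->]]; last by rewrite mulnC gsm.
have gr : g ^+ (q ^ (j %% s)) = g.
  by move: gj; rewrite {1}(divn_eq j s) mulnC expnD exprM gsm.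
rewrite /dvdn; apply: contraT; rewrite -lt0n => r_gt0.
have := s_min (j %% s)%N; rewrite r_gt0 gr eqxx => /(_ isT).
by rewrite leqNgt ltn_mod s_gt0.
Qed.

Lemma fixed_expr_card_image (K : finFieldType) (R : idomainType) (f : {rmorphism K -> R})
    (x : R) :
  x ^+ #|K| = x -> exists a, x = f a.
Proof.
move=> xK.
have : root (map_poly f ('X^#|K| - 'X)) x.
  by rewrite rmorphB /= map_polyXn map_polyX rootE !hornerE xK subrr.
rewrite finField_genPoly rmorph_prod /=.
under eq_bigr do rewrite rmorphB /= map_polyX map_polyC /=.
rewrite -big_enum -(big_map f xpredT (fun y => 'X - y%:P)) root_prod_XsubC.
by case/mapP => a _ ->; exists a.
Qed.

Lemma dvdp_Xl (R : idomainType) (p : {poly R}) : ('X %| p) = (p`_0 == 0).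
Proof. by rewrite -(subr0 'X) -polyC0 dvdp_XsubCl /root horner_coef0. Qed.

Lemma irredp_coef0_neq0 (F : fieldType) (R : idomainType) (h : {rmorphism F -> R})
    (p : {poly F}) (x : R) :
  irreducible_poly p -> root (map_poly h p) x -> x != 0 -> p`_0 != 0.
Proof.
move=> [_ irr_p] px; apply: contra => /eqP p0.
have Xp : map_poly h 'X %= map_poly h p by rewrite eqp_map irr_p ?size_polyX ?dvdp_Xl ?p0.
by rewrite -rootX -(map_polyX h) (eqp_root Xp).
Qed.

Lemma coef_comp_scaleX (R : comNzRingType) (p : {poly R}) (c : R) i :
  (p \Po (c *: 'X))`_i = c ^+ i * p`_i.
Proof.
rewrite comp_polyE; under eq_bigr do rewrite exprZn scalerA.
rewrite -(poly_def _ (fun j => p`_j * c ^+ j)) coef_poly mulrC.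
by case: ltnP => // /leq_sizeP ->; rewrite ?mulr0.
Qed.

Definition dilate_diff {R : comNzRingType} (p : {poly R}) (g : R) : {poly R} :=
  p \Po (g *: 'X) - g ^+ (size p).-1 *: p.

Section DilateDiff.

Variables (R : comNzRingType) (p : {poly R}) (g : R).

Lemma coef_dilate_diff i :
  (dilate_diff p g)`_i = p`_i * (g ^+ i - g ^+ (size p).-1).
Proof. by rewrite coefB coef_comp_scaleX coefZ -mulrBl mulrC. Qed.

Lemma root_dilate_diff x : root p x -> root p (g * x) -> root (dilate_diff p g) x.
Proof.
move=> /rootP px /rootP pgx.
by rewrite /root hornerD hornerN hornerZ horner_comp hornerZ hornerX pgx px mulr0 subrr.
Qed.

Lemma size_dilate_diff j :
  (forall i, (j <= i < (size p).-1)%N -> p`_i = 0) -> (size (dilate_diff p g) <= j)%N.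
Proof.
move=> gap; apply/leq_sizeP => i le_ji; rewrite coef_dilate_diff.
case: (ltngtP i (size p).-1) => [lt_i_deg | lt_deg_i | ->]; last by rewrite subrr mulr0.
  by rewrite gap ?le_ji ?mul0r.
have /leq_sizeP -> // : (size p <= i)%N by lia.
by rewrite mul0r.
Qed.

Lemma dilate_diff_polyOver (S : subringClosed R) :
  p \is a polyOver S -> g \in S -> dilate_diff p g \is a polyOver S.
Proof.
move=> Sp Sg; rewrite rpredB ?polyOverZ ?rpredX ?polyOver_comp //.
by rewrite polyOverZ ?polyOverX.
Qed.

End DilateDiff.

Lemma dilate_diff_eq0 (R : idomainType) (p : {poly R}) (g : R) :
  p`_0 != 0 -> dilate_diff p g = 0 -> forall i, p`_i != 0 -> g ^+ i = 1.
Proof.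
have coef_eq0 i : dilate_diff p g = 0 -> p`_i != 0 -> g ^+ i = g ^+ (size p).-1.
  move=> /(congr1 (coefp i)) /eqP; rewrite /= coef_dilate_diff coef0 mulf_eq0.
  by case/orP=> [/eqP->|]; rewrite ?eqxx // subr_eq0 => /eqP.
move=> p0 eq0 i pi; rewrite coef_eq0 //; symmetry.
by rewrite -(coef_eq0 0%N) ?expr0.
Qed.

Lemma adjoin_degree_lt_size (F : fieldType) (L : fieldExtType F) (K : {subfield L})
    (x : L) (p : {poly L}) :
  p \is a polyOver K -> p != 0 -> root p x -> (adjoin_degree K x < size p)%N.
Proof.
move=> Kp p_nz px; rewrite ltnNge; apply: contra p_nz => p_small.
by rewrite -(root_small_adjoin_poly Kp p_small).
Qed.

Lemma adjoin_degree_tower (F : fieldType) (L : fieldExtType F) (K : {subfield L}) (x y : L) :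
  (adjoin_degree K y <= adjoin_degree <<K; x>> y * adjoin_degree K x)%N.
Proof.
rewrite -(leq_pmul2r (adim_gt0 K)) -dim_Fadjoin -mulnA -dim_Fadjoin -dim_Fadjoin.
apply: dimvS; apply/FadjoinP; split; last exact: memv_adjoin.
exact: subv_trans (subv_adjoin K x) (subv_adjoin _ y).
Qed.

Lemma adjoin_degree_irredp (F : fieldType) (L : fieldExtType F) (p : {poly F}) (x : L) :
  irreducible_poly p -> root (map_poly (in_alg L) p) x -> (adjoin_degree 1 x).+1 = size p.
Proof.
move=> irr_p px; have [r Dr] := polyOver1P (minPolyOver 1 x).
have : minPoly 1 x %| map_poly (in_alg L) p.
  by apply: minPoly_dvdp => //; apply/polyOver1P; exists p.
rewrite Dr dvdp_map => r_dvd_p.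
have size_r : size r = (adjoin_degree 1 x).+1 by rewrite -(size_minPoly 1 x) Dr size_map_poly.
have [_ /(_ r)] := irr_p; rewrite size_r => /(_ isT r_dvd_p) /eqp_size.
by rewrite size_r.
Qed.

Lemma adjoin_degree_ratio_le (F : fieldType) (L : fieldExtType F) (K : {subfield L}) (d : nat)
    (c : 'I_d.+1 -> L) (a b : L) :
  (forall i, c i \in K) -> (exists i, c i != 0) -> b != 0 ->
  \sum_(i < d.+1) c i * a ^+ (d - i) * b ^+ i = 0 -> (adjoin_degree K (a / b) <= d)%N.
Proof.
move=> Kc [i0 ci0] b_nz rel.
pose P := \poly_(j < d.+1) c (inord (d - j)).
have KP : P \is a polyOver K by apply: polyOver_poly => j _; apply: Kc.
have P_nz : P != 0.
  apply: contraNneq ci0 => /(congr1 (coefp (d - i0))) /=.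
  by rewrite coef_poly ltnS leq_subr subKn ?leq_ord // inord_val coef0 => ->.
have rootP : root P (a / b).
  apply/rootP/(mulIf (expf_neq0 d b_nz)); rewrite mul0r -rel horner_poly mulr_suml.
  rewrite (reindex_inj rev_ord_inj); apply: eq_bigr => i _ /=.
  have split_bd : b ^+ d = b ^+ (d - i) * b ^+ i by rewrite -exprD subnK ?leq_ord.
  rewrite subSS subKn ?leq_ord // inord_val split_bd !mulrA.
  by rewrite -(mulrA _ ((a / b) ^+ _)) -exprMn divfK.
by rewrite -ltnS (leq_trans (adjoin_degree_lt_size KP P_nz rootP)) ?size_poly.
Qed.

Lemma adjoin_degree_dilate_lt (F : fieldType) (L : fieldExtType F) (K : {subfield L})
    (P : {poly L}) (x g : L) j :
  P \is a polyOver K -> root P x -> root P (g * x) -> dilate_diff P g != 0 ->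
  (forall i, (j <= i < (size P).-1)%N -> P`_i = 0) -> (adjoin_degree <<K; g>> x < j)%N.
Proof.
move=> KP Px Pgx N_nz gap.
apply: leq_trans (size_dilate_diff g gap).
apply: adjoin_degree_lt_size N_nz (root_dilate_diff Px Pgx).
apply: dilate_diff_polyOver; last exact: memv_adjoin.
by apply: polyOverS KP => y; apply: subvP (subv_adjoin K g) y.
Qed.

Section QPolynomial.

Variables (F : fieldType) (q n : nat) (L : {poly F}).
Hypotheses (q_gt1 : (1 < q)%N) (L_qpoly : is_qpoly_deg q n L).

Lemma qpoly_coef0 : L`_0 = 0.
Proof.
apply/eqP; apply: contraT => /L_qpoly.2 [j [_ /esym/eqP]].
by rewrite expn_eq0 (gtn_eqF (ltnW q_gt1)).
Qed.

Lemma qpoly_divXK : L %/ 'X * 'X = L.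
Proof. by rewrite divpK // dvdp_Xl qpoly_coef0. Qed.

Lemma coef_qpoly_divX i : (L %/ 'X)`_i = L`_i.+1.
Proof. by rewrite -{2}qpoly_divXK coefMX. Qed.

Lemma size_qpoly_divX : size (L %/ 'X) = (q ^ n)%N.
Proof. by rewrite size_divp ?polyX_eq0 // size_polyX L_qpoly.1 subn1. Qed.

Lemma qpoly_lead_neq0 : L`_(q ^ n) != 0.
Proof.
have: lead_coef L != 0 by rewrite lead_coef_eq0 -size_poly_eq0 L_qpoly.1.
by rewrite lead_coefE L_qpoly.1.
Qed.

Lemma root_qpoly_divX (R : idomainType) (h : {rmorphism F -> R}) x :
  root (map_poly h L) x -> x != 0 -> root (map_poly h (L %/ 'X)) x.
Proof.
by rewrite -{1}qpoly_divXK rmorphM /= map_polyX rootM rootX => /orP[] // /eqP ->; rewrite eqxx.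
Qed.

Lemma coef_qpoly_divX_gap a :
  (forall j, (a < j)%N -> (j < n)%N -> L`_(q ^ j) = 0) ->
  forall i, (q ^ a <= i < (q ^ n).-1)%N -> (L %/ 'X)`_i = 0.
Proof.
move=> gap i /andP[le_qa_i lt_i_qn]; rewrite coef_qpoly_divX.
have [// | /[dup] Li /L_qpoly.2 [j [_ Dj]]] := eqVneq L`_i.+1 0.
move: Li; rewrite Dj gap ?eqxx // -(ltn_exp2l _ _ q_gt1) -Dj; lia.
Qed.

Lemma qpoly_fixed (R : pzSemiRingType) (g : R) :
  (0 < n)%N -> (forall s, (1 < s)%N -> ~ is_qs_poly q s L) ->
  (forall i, (L %/ 'X)`_i != 0 -> g ^+ i = 1) -> g ^+ q = g.
Proof.
move=> n_gt0 not_qs gL.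
have g_fixed j : L`_(q ^ j) != 0 -> g ^+ (q ^ j) = g.
  have qj_gt0 : (0 < q ^ j)%N by rewrite expn_gt0 ltnW.
  by rewrite -(prednK qj_gt0) -coef_qpoly_divX exprS => /gL ->; rewrite mulr1.
have [s s_gt0 period] := qpow_fixed_period n_gt0 (g_fixed n qpoly_lead_neq0).
have [s_gt1 | ] := ltnP 1 s.
  case: (not_qs s s_gt1) => i /[dup] Li /L_qpoly.2 [j [_ Dj]]; exists j; split=> //.
  by rewrite -period g_fixed -?Dj.
move=> s_le1; have s_eq1 : s = 1%N by apply/eqP; rewrite eqn_leq s_le1.
by apply/eqP; rewrite -[q in g ^+ q]expn1 period s_eq1.
Qed.

Lemma qpoly_dilate_diff_eq0 (R : idomainType) (h : {rmorphism F -> R}) (g : R) :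
  (0 < n)%N -> (forall s, (1 < s)%N -> ~ is_qs_poly q s L) -> (L %/ 'X)`_0 != 0 ->
  dilate_diff (map_poly h (L %/ 'X)) g = 0 -> g ^+ q = g.
Proof.
move=> n_gt0 not_qs; rewrite -(fmorph_eq0 h) -coef_map => P0 /(dilate_diff_eq0 P0) g1.
by apply: qpoly_fixed => // i Li; apply: g1; rewrite coef_map fmorph_eq0.
Qed.

End QPolynomial.

Section Independence.

Variables (K : finFieldType) (F : fieldType) (f : {rmorphism K -> F}).
Variables (E : fieldExtType F) (alpha beta : E).
Hypothesis indep : forall a b : K, (f a)%:A * alpha + (f b)%:A * beta = 0 -> a = 0 /\ b = 0.

Lemma indep_neq0l : alpha != 0.
Proof.
apply/eqP => a0; suff [/eqP] : (1 : K) = 0 /\ (0 : K) = 0 by rewrite oner_eq0.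
by apply: indep; rewrite a0 rmorph0 scale0r mulr0 mul0r addr0.
Qed.

Lemma indep_neq0r : beta != 0.
Proof.
apply/eqP => b0; suff [_ /eqP] : (0 : K) = 0 /\ (1 : K) = 0 by rewrite oner_eq0.
by apply: indep; rewrite b0 rmorph0 scale0r !mul0r mulr0 addr0.
Qed.

Lemma indep_ratio a : alpha / beta != (f a)%:A.
Proof.
apply/eqP => ratio; suff [/eqP] : (1 : K) = 0 /\ - a = 0 by rewrite oner_eq0.
apply: indep; rewrite rmorph1 rmorphN scale1r mul1r scaleNr mulNr -ratio.
by rewrite divfK ?subrr ?indep_neq0r.
Qed.

Lemma indep_ratio_not_fixed : (alpha / beta) ^+ #|K| != alpha / beta.
Proof.
apply/eqP => /(fixed_expr_card_image (in_alg E \o f)) [a ratio].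
by have := indep_ratio a; rewrite ratio eqxx.
Qed.

End Independence.

Theorem theorem7p8
  (p q m : nat) (F : fieldType) (K : finFieldType) (f : {rmorphism K -> F})
  (E : fieldExtType F) (L : {poly F}) (n k d : nat) (alpha beta : E) :
  prime p -> (0 < m)%N -> q = (p ^ m)%N ->
  p \in [pchar F] ->
  #|K| = q ->
  L \is monic ->
  is_qpoly_deg q n L ->
  irreducible_poly (L %/ 'X) ->
  (forall s : nat, (1 < s)%N -> ~ is_qs_poly q s L) ->
  (1 <= k <= n)%N ->
  L`_(q ^ (n - k)) != 0 ->
  (forall j : nat, (n - k < j)%N -> (j < n)%N -> L`_(q ^ j) = 0) ->
  splittingFieldFor 1%VS (map_poly (in_alg E) L) fullv ->
  root (map_poly (in_alg E) L) alpha ->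
  root (map_poly (in_alg E) L) beta ->
  (forall a b : K, (f a)%:A * alpha + (f b)%:A * beta = 0 -> a = 0 /\ b = 0) ->
  (0 < d)%N ->
  (exists c : 'I_d.+1 -> K, (exists i, c i != 0) /\
     \sum_(i < d.+1) (f (c i))%:A * alpha ^+ (d - i) * beta ^+ i = 0) ->
  (q ^ k + 1 <= d)%N.
Proof.
move=> p_prime m_gt0 Dq _ cardK _ L_qpoly irr_L' not_qs /andP[k_gt0 le_kn] _ gap _
  L_alpha L_beta indep _ [c [c_nz rel]].
have q_gt1 : (1 < q)%N by rewrite Dq -(expn0 p) ltn_exp2l ?prime_gt1.
have [alpha_nz beta_nz] := (indep_neq0l indep, indep_neq0r indep).
set P := map_poly (in_alg E) (L %/ 'X).
have P_alpha : root P alpha := root_qpoly_divX q_gt1 L_qpoly L_alpha alpha_nz.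
have P_beta : root P beta := root_qpoly_divX q_gt1 L_qpoly L_beta beta_nz.
set g := alpha / beta.
have deg_beta : (adjoin_degree 1 beta).+1 = (q ^ n)%N.
  by rewrite (adjoin_degree_irredp irr_L' P_beta) (size_qpoly_divX L_qpoly).
have deg_g : (adjoin_degree 1 g <= d)%N.
  apply: (adjoin_degree_ratio_le (c := fun i => (f (c i))%:A)) rel => //.
  - by move=> i; rewrite rpredZ ?rpred1.
  - by have [i ci] := c_nz; exists i; rewrite scaler_eq0 oner_eq0 fmorph_eq0 orbF.
have N_nz : dilate_diff P g != 0.
  have L'0 := irredp_coef0_neq0 irr_L' P_beta beta_nz.
  apply: contra_neq (indep_ratio_not_fixed indep); rewrite cardK.
  exact: (qpoly_dilate_diff_eq0 q_gt1 L_qpoly (leq_trans k_gt0 le_kn) not_qs L'0).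
have deg_beta_g : (adjoin_degree <<1; g>> beta < q ^ (n - k))%N.
  apply: adjoin_degree_dilate_lt N_nz _ => //; first by apply/polyOver1P; exists (L %/ 'X).
    by rewrite divfK.
  move=> i; rewrite coef_map size_map_poly (size_qpoly_divX L_qpoly).
  by move/(coef_qpoly_divX_gap q_gt1 L_qpoly gap) ->; apply: rmorph0.
(* Restated so that [1] is the same term as in [deg_beta] and [deg_g]; [nia] needs equal atoms. *)
have tower : (adjoin_degree 1 beta <= adjoin_degree <<1; g>> beta * adjoin_degree 1 g)%N.
  exact: adjoin_degree_tower.
have := leq_mul (leqnn (adjoin_degree <<1; g>> beta)) deg_g.
have qn : (q ^ n = q ^ k * q ^ (n - k))%N by rewrite -expnD subnKC.
have qk_gt1 : (1 < q ^ k)%N by rewrite -(expn0 q) ltn_exp2l.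
nia.
Qed.
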